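(* Let $\lambda_A:{\mathcal U}_A^{\ge0}\otimes{\mathcal U}_q^{c_m}\to{\mathcal U}_A^{\ge0}$ be the linear map $\lambda_A(u\otimes v)=\mathrm{ad}(\pi_A(u))(v)$. Then $\mathrm{Im}(\lambda_A)\subseteq{\mathcal U}_q^{c_m}$, and $\lambda_A$ endows ${\mathcal U}_q^{c_m}$ with the structure of a left ${\mathcal U}_A^{\ge0}$-module algebra.
   Context: $k$ algebraically closed of characteristic $0$, $q\in k^\times$ not a root of unity, $\hat q=q-q^{-1}$, $m>1$, $[u,v]=uv-q^{-1}vu$. $Q(A_m)$ is the lattice of $(a_1,\dots,a_{m+1})\in\mathbb Z^{m+1}$ with $\sum a_i=0$, standard inner product, simple roots $\alpha_i=e_i-e_{i+1}$, reflections $s_i$. ${\mathcal U}_q(\mathfrak{sl}_{m+1})$ is generated by $E_i,F_i$ ($1\le i\le m$), $K_\mu$ with relations $K_0=1$, $K_\mu K_\lambda=K_{\mu+\lambda}$, $K_\mu E_i=q^{\langle\mu,\alpha_i\rangle}E_iK_\mu$, $K_\mu F_i=q^{-\langle\mu,\alpha_i\rangle}F_iK_\mu$, $E_iE_j=E_jE_i$, $F_iF_j=F_jF_i$ if $\langle\alpha_i,\alpha_j\rangle\in\{0,2\}$, $E_i[E_i,E_j]=q[E_i,E_j]E_i$, $F_i[F_i,F_j]=q[F_i,F_j]F_i$ if $\langle\alpha_i,\alpha_j\rangle=-1$, $E_iF_j-F_jE_i=\delta_{ij}(K_{\alpha_i}-K_{-\alpha_i})/\hat q$; Hopf structure $\Delta(E_i)=K_{-\alpha_i}\otimes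 E_i+E_i\otimes1$, $\Delta(K_\mu)=K_\mu\otimes K_\mu$, $\Delta(F_i)=1\otimes F_i+F_i\otimes K_{\alpha_i}$, $S(E_i)=-K_{\alpha_i}E_i$, $S(K_\mu)=K_{-\mu}$, $\epsilon(E_i)=0$, $\epsilon(K_\mu)=1$; Lusztig automorphisms $T_iK_\mu=K_{s_i\mu}$, $T_iE_i=-F_iK_{\alpha_i}$, $T_iE_j=E_j$ if $\langle\alpha_i,\alpha_j\rangle=0$, $T_iE_j=E_iE_j-q^{-1}E_jE_i$ if $\langle\alpha_i,\alpha_j\rangle=-1$. ${\mathcal U}_q^{c_m}$ is the subalgebra generated by $z_j=T_1\cdots T_{j-1}E_j$ ($1\le j\le m$) for $c_m=s_1\cdots s_m$. ${\mathcal U}_A^{\ge0}$ is the Hopf subalgebra generated by the $E_i$ and $K_\mu$. $\pi_A:{\mathcal U}_A^{\ge0}\to{\mathcal U}_A^{\ge0}$ is the algebra map with $\pi_A(E_1)=0$, $\pi_A(E_i)=E_i$ ($1<i\le m$), $\pi_A(K_\mu)=K_\mu$. $\mathrm{ad}(h)(u)=\sum h_{(1)}uS(h_{(2)})$. *)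

From HB Require Import structures.
From mathcomp Require Import all_boot all_order all_algebra.
Set Implicit Arguments. Unset Strict Implicit. Unset Printing Implicit Defensive.
Import Order.TTheory GRing.Theory Num.Theory.
Local Open Scope ring_scope.

Definition QA (m : nat) := {v : 'rV[int]_m.+1 | \sum_i v ord0 i == 0}.

Lemma lat0_proof (m : nat) : \sum_(i < m.+1) (0 : 'rV[int]_m.+1) ord0 i == 0.
Proof. by rewrite big1 // => i _; rewrite mxE. Qed.

Definition lat0 (m : nat) : QA m := exist _ 0 (lat0_proof m).
(* projection of a vector to the lattice (used only on vectors that lie in it) *)
Definition latof (m : nat) (v : 'rV[int]_m.+1) : QA m := insubd (lat0 m) v.
Definition latadd (m : nat) (x y : QA m) : QA m := latof (val x + val y).
Definition latopp (m : nat) (x : QA m) : QA m := latof (- val x).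
Definition lpair (m : nat) (x y : QA m) : int := \sum_i val x ord0 i * val y ord0 i.
(* simple root alpha_i = e_i - e_{i+1}  (index i : 'I_m stands for the paper's i+1) *)
Definition alpha (m : nat) (i : 'I_m) : QA m :=
  latof (delta_mx ord0 (widen_ord (leqnSn m) i) - delta_mx ord0 (lift ord0 i)).
Definition srefl (m : nat) (i : 'I_m) (mu : QA m) : QA m :=
  latof (val mu - val (alpha i) *~ lpair mu (alpha i)).

Definition alg_hom (k : fieldType) (A B : algType k) (f : A -> B) : Prop :=
  (forall a x y, f (a *: x + y) = a *: f x + f y) /\ f 1 = 1 /\
  (forall x y, f (x * y) = f x * f y).

Inductive in_alg_gen (k : fieldType) (A : algType k) (G : A -> Prop) : A -> Prop :=
| iag_gen x : G x -> in_alg_gen G x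
| iag_one : in_alg_gen G 1
| iag_lin a x y : in_alg_gen G x -> in_alg_gen G y -> in_alg_gen G (a *: x + y)
| iag_mul x y : in_alg_gen G x -> in_alg_gen G y -> in_alg_gen G (x * y).

Definition qbr (k : fieldType) (A : algType k) (q : k) (u v : A) : A :=
  u * v - q^-1 *: (v * u).

Definition Uq_rels (k : fieldType) (q : k) (m : nat) (B : algType k)
    (E F : 'I_m -> B) (K : QA m -> B) : Prop :=
  K (lat0 m) = 1 /\
  (forall mu la, K mu * K la = K (latadd mu la)) /\
  (forall mu i, K mu * E i = q ^ lpair mu (alpha i) *: (E i * K mu)) /\
  (forall mu i, K mu * F i = q ^ (- lpair mu (alpha i)) *: (F i * K mu)) /\
  (forall i j, (lpair (alpha i) (alpha j) == 0) || (lpair (alpha i) (alpha j) == 2) ->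
     E i * E j = E j * E i /\ F i * F j = F j * F i) /\
  (forall i j, lpair (alpha i) (alpha j) = -1 ->
     E i * qbr q (E i) (E j) = q *: (qbr q (E i) (E j) * E i) /\
     F i * qbr q (F i) (F j) = q *: (qbr q (F i) (F j) * F i)) /\
  (forall i j, E i * F j - F j * E i =
     if i == j then (q - q^-1)^-1 *: (K (alpha i) - K (latopp (alpha i))) else 0).

(* U is (a copy of) U_q(sl_{m+1}): the algebra presented by these generators/relations *)
Definition is_Uq (k : fieldType) (q : k) (m : nat) (U : algType k)
    (E F : 'I_m -> U) (K : QA m -> U) : Prop :=
  Uq_rels q E F K /\
  forall (B : algType k) (E' F' : 'I_m -> B) (K' : QA m -> B),
    Uq_rels q E' F' K' ->
    exists f : U -> B,
      [/\ alg_hom f, (forall i, f (E i) = E' i), (forall i, f (F i) = F' i),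
          (forall mu, f (K mu) = K' mu) &
          (forall g : U -> B, alg_hom g -> (forall i, g (E i) = E' i) ->
             (forall i, g (F i) = F' i) -> (forall mu, g (K mu) = K' mu) ->
             forall x, g x = f x)].

(* T together with i1 a = a (x) 1, i2 b = 1 (x) b is the tensor product algebra U (x) U *)
Definition is_tensor (k : fieldType) (U T : algType k) (i1 i2 : U -> T) : Prop :=
  alg_hom i1 /\ alg_hom i2 /\ (forall a b, i1 a * i2 b = i2 b * i1 a) /\
  forall (V : lmodType k) (f : U -> U -> V),
    (forall a x y z, f (a *: x + y) z = a *: f x z + f y z) ->
    (forall a x y z, f z (a *: x + y) = a *: f z x + f z y) ->
    exists g : T -> V,
      [/\ (forall a s t, g (a *: s + t) = a *: g s + g t),
          (forall a b, g (i1 a * i2 b) = f a b) &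
          (forall g' : T -> V, (forall a s t, g' (a *: s + t) = a *: g' s + g' t) ->
             (forall a b, g' (i1 a * i2 b) = f a b) -> forall t, g' t = g t)].

(* Hopf structure (as much as is specified in the paper) *)
Definition Uq_coproduct (k : fieldType) (m : nat) (U T : algType k)
    (E F : 'I_m -> U) (K : QA m -> U) (i1 i2 : U -> T) (Delta : U -> T) : Prop :=
  alg_hom Delta /\
  (forall i, Delta (E i) = i1 (K (latopp (alpha i))) * i2 (E i) + i1 (E i)) /\
  (forall mu, Delta (K mu) = i1 (K mu) * i2 (K mu)) /\
  (forall i, Delta (F i) = i2 (F i) + i1 (F i) * i2 (K (alpha i))).

Definition Uq_antipode (k : fieldType) (m : nat) (U : algType k)
    (E : 'I_m -> U) (K : QA m -> U) (S : U -> U) : Prop :=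
  (forall a x y, S (a *: x + y) = a *: S x + S y) /\ S 1 = 1 /\
  (forall x y, S (x * y) = S y * S x) /\
  (forall i, S (E i) = - (K (alpha i) * E i)) /\
  (forall mu, S (K mu) = K (latopp mu)).

Definition Uq_counit (k : fieldType) (m : nat) (U : algType k)
    (E : 'I_m -> U) (K : QA m -> U) (eps : U -> k) : Prop :=
  (forall a x y, eps (a *: x + y) = a * eps x + eps y) /\ eps 1 = 1 /\
  (forall x y, eps (x * y) = eps x * eps y) /\
  (forall i, eps (E i) = 0) /\ (forall mu, eps (K mu) = 1).

Definition lusztig (k : fieldType) (q : k) (m : nat) (U : algType k)
    (E F : 'I_m -> U) (K : QA m -> U) (Tl : 'I_m -> U -> U) : Prop :=
  forall i, alg_hom (Tl i) /\
    (forall mu, Tl i (K mu) = K (srefl i mu)) /\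
    Tl i (E i) = - (F i * K (alpha i)) /\
    (forall j, lpair (alpha i) (alpha j) = 0 -> Tl i (E j) = E j) /\
    (forall j, lpair (alpha i) (alpha j) = -1 -> Tl i (E j) = E i * E j - q^-1 *: (E j * E i)).

(* z_j = T_1 ... T_{j-1} E_j  (0-based: T_0 ... T_{j-1} E_j) *)
Definition zgen (k : fieldType) (m : nat) (U : algType k)
    (E : 'I_m -> U) (Tl : 'I_m -> U -> U) (j : 'I_m) : U :=
  foldr (fun i x => Tl i x) (E j) [seq i <- enum 'I_m | (val i < val j)%N].

Definition Uge0 (k : fieldType) (m : nat) (U : algType k)
    (E : 'I_m -> U) (K : QA m -> U) : U -> Prop :=
  in_alg_gen (fun x => (exists i, x = E i) \/ (exists mu, x = K mu)).

Definition Ucm (k : fieldType) (m : nat) (U : algType k)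
    (E : 'I_m -> U) (Tl : 'I_m -> U -> U) : U -> Prop :=
  in_alg_gen (fun x => exists j, x = zgen E Tl j).

(* pi_A : U^{>=0} -> U^{>=0}, algebra map killing E_1 (0-based index 0) *)
Definition piA_spec (k : fieldType) (m : nat) (U : algType k)
    (E : 'I_m -> U) (K : QA m -> U) (pi : U -> U) : Prop :=
  (forall a x y, Uge0 E K x -> Uge0 E K y -> pi (a *: x + y) = a *: pi x + pi y) /\
  (forall x y, Uge0 E K x -> Uge0 E K y -> pi (x * y) = pi x * pi y) /\
  pi 1 = 1 /\
  (forall i, pi (E i) = if val i == 0%N then 0 else E i) /\
  (forall mu, pi (K mu) = K mu).

(* adT u : U (x) U -> U is the linear map a (x) b |-> a u S(b);
   then ad(h)(u) = adT u (Delta h) = sum h_(1) u S(h_(2)) *)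
Definition adT_spec (k : fieldType) (U T : algType k) (i1 i2 : U -> T) (S : U -> U)
    (adT : U -> T -> U) : Prop :=
  forall u, (forall a s t, adT u (a *: s + t) = a *: adT u s + adT u t) /\
            (forall a b, adT u (i1 a * i2 b) = a * u * S b).

From Pilot Require Import Defs.
From HB Require Import structures.
From mathcomp Require Import all_boot all_order all_algebra.
From mathcomp Require Import ring zify.
Import Order.TTheory GRing.Theory Num.Theory.
Set Implicit Arguments. Unset Strict Implicit. Unset Printing Implicit Defensive.
Local Open Scope ring_scope.

(* Structure of the proof.
   - General algebra: linear maps, spans, generated subalgebras; the tensor
     product through its universal property (bilinear maps factor, f (x) g
     exists); the twisted adjoint map adT, so that ad h = adT _ (Delta h) is
     an action (ad 1 = id, ad (h h') = ad h o ad h'); q-Serre identities; and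
     spectral projectors, polynomials in an operator theta that isolate the
     lam^0-eigenvectors of theta among the lam^d-eigenvectors, d <= D.
   - Image: z_j is the iterated q-bracket [...[E_1, E_2], ..., E_j].  ad K_mu
     is conjugation, which rescales each z_j, and ad E_i (i > 1) is a twisted
     derivation sending z_j to 0 or to a multiple of z_(j+1).  As pi_A lands
     in the subalgebra generated by the K_mu and the E_i (i > 1), the image
     of lambda_A lies in U_q^(c_m).
   - Module algebra: by induction on U^(>=0), ad x (v w) = G (Delta x) where
     G (a (x) b) = ad a v * ad b w.  Grading U^(>=0) by the number of E_1's,
     detected by conjugation with K_mu0, pi_A is the degree-0 projection;
     on bounded degrees it agrees with a globally linear spectral projector
     P, and (P (x) P) (Delta h) = Delta (pi_A h).  This converts any expression
     Delta h = sum p1 (x) p2 into the required identity. *)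

(* A reflexive decision procedure for identities between k-linear
   combinations of arbitrary vectors: both sides are reified as formal
   combinations of a common list of atoms, and the coefficients of each atom
   are compared with [ring]. *)
Section LinearCombinations.
Variables (k : fieldType) (V : lmodType k).

Inductive lexpr := LAtom of nat | LAdd of lexpr & lexpr | LOpp of lexpr
                 | LScale of k & lexpr | LZero.

Fixpoint leval (atoms : seq V) (e : lexpr) : V :=
  match e with
  | LAtom i => nth 0 atoms i
  | LAdd a b => leval atoms a + leval atoms b
  | LOpp a => - leval atoms a
  | LScale c a => c *: leval atoms a
  | LZero => 0
  end.

Fixpoint lcoef (e : lexpr) (i : nat) : k :=
  match e with
  | LAtom j => if i == j then 1 else 0
  | LAdd a b => lcoef a i + lcoef b i
  | LOpp a => - lcoef a i
  | LScale c a => c * lcoef a i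
  | LZero => 0
  end.

Lemma leval_sum atoms e :
  leval atoms e = \sum_(i < size atoms) lcoef e i *: nth 0 atoms i.
Proof.
elim: e => [j|a IHa b IHb|a IHa|c a IHa|] /=.
- case: (ltnP j (size atoms)) => hj.
    rewrite (bigD1 (Ordinal hj)) //= eqxx scale1r big1 ?addr0 // => i /negbTE.
    by rewrite -val_eqE /= => ->; rewrite scale0r.
  rewrite nth_default // big1 // => i _.
  by rewrite ifN ?scale0r // neq_ltn (leq_trans (ltn_ord i) hj).
- by rewrite IHa IHb -big_split /=; apply: eq_bigr => i _; rewrite scalerDl.
- by rewrite IHa -sumrN; apply: eq_bigr => i _; rewrite scaleNr.
- by rewrite IHa scaler_sumr; apply: eq_bigr => i _; rewrite scalerA.
- by rewrite big1 // => i _; rewrite scale0r.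
Qed.

Fixpoint all_below (n : nat) (P : nat -> Prop) : Prop :=
  if n is n'.+1 then all_below n' P /\ P n' else True.

Lemma all_belowP n P : all_below n P -> forall i, (i < n)%N -> P i.
Proof.
elim: n => [//|n IH] /= [H1 H2] i; rewrite ltnS leq_eqVlt.
by case/orP => [/eqP -> //|]; apply: IH.
Qed.

Lemma leval_eq atoms e1 e2 :
  all_below (size atoms) (fun i => lcoef e1 i = lcoef e2 i) ->
  leval atoms e1 = leval atoms e2.
Proof.
move=> /all_belowP H; rewrite !leval_sum.
by apply: eq_bigr => i _; rewrite H.
Qed.
End LinearCombinations.
Arguments leval {k V}. Arguments LAdd {k}. Arguments LOpp {k}. Arguments LScale {k}.

Ltac lc_find t atoms :=
  lazymatch atoms with
  | (?h :: ?r)%SEQ => match constr:(tt) with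
                      | _ => let _ := constr:(@erefl _ t : t = h) in constr:(0%N)
                      | _ => let n := lc_find t r in constr:(n.+1) end
  end.
Ltac lc_size atoms :=
  lazymatch atoms with
  | nil => constr:(0%N) | (_ :: ?r)%SEQ => let n := lc_size r in constr:(n.+1) end.
Ltac lc_snoc atoms t :=
  lazymatch atoms with
  | nil => constr:((t :: nil)%SEQ)
  | (?h :: ?r)%SEQ => let r' := lc_snoc r t in constr:((h :: r')%SEQ) end.
Ltac lc_reify K t atoms :=
  lazymatch t with
  | (?x + ?y)%R => lazymatch lc_reify K x atoms with (?a, ?atoms1) =>
                   lazymatch lc_reify K y atoms1 with (?b, ?atoms2) =>
                   constr:((LAdd a b, atoms2)) end end
  | (- ?x)%R => lazymatch lc_reify K x atoms with (?a, ?atoms1) =>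
                constr:((LOpp a, atoms1)) end
  | (?c *: ?x)%R => lazymatch lc_reify K x atoms with (?a, ?atoms1) =>
                    constr:((LScale c a, atoms1)) end
  | 0%R => constr:((LZero K, atoms))
  | _ => match constr:(tt) with
         | _ => let n := lc_find t atoms in constr:((LAtom K n, atoms))
         | _ => let n := lc_size atoms in let atoms' := lc_snoc atoms t in
                constr:((LAtom K n, atoms'))
         end
  end.
(* [lincomb k] proves (or reduces to coefficient identities over k) a goal
   [l = r] between linear combinations over the field k. *)
Ltac lincomb K :=
  lazymatch goal with
  | |- @eq ?V ?l ?r =>
    lazymatch lc_reify K l (@nil V) with (?el, ?atoms1) =>
    lazymatch lc_reify K r atoms1 with (?er, ?atoms) =>
    change (leval atoms el = leval atoms er); apply: leval_eq;
    simpl; repeat split; try ring end end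
  end.

(* k-linear maps, in the unbundled form used by the definitions of Defs. *)
Definition lin (k : fieldType) (V W : lmodType k) (f : V -> W) :=
  forall a x y, f (a *: x + y) = a *: f x + f y.
Arguments lin {k V W}.

Section LinearMaps.
Variables (k : fieldType) (V W : lmodType k) (f : V -> W).
Hypothesis hf : lin f.

Lemma lin0 : f 0 = 0.
Proof.
have := hf 1 0 0; rewrite scaler0 addr0 scale1r => H.
by apply: (addrI (f 0)); rewrite addr0 -H.
Qed.
Lemma linD x y : f (x + y) = f x + f y.
Proof. by have := hf 1 x y; rewrite !scale1r. Qed.
Lemma linZ a x : f (a *: x) = a *: f x.
Proof. by rewrite -[a *: x]addr0 hf lin0 addr0. Qed.
Lemma linN x : f (- x) = - f x.
Proof. by rewrite -scaleN1r linZ scaleN1r. Qed.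
Lemma linB x y : f (x - y) = f x - f y.
Proof. by rewrite linD linN. Qed.
Lemma lin_sum (I : Type) (s : seq I) (F : I -> V) :
  f (\sum_(i <- s) F i) = \sum_(i <- s) f (F i).
Proof. by elim: s => [|x s IH]; rewrite ?big_nil ?lin0 // !big_cons linD IH. Qed.
End LinearMaps.

Section AlgebraMorphisms.
Variables (k : fieldType) (A B : algType k) (f : A -> B).
Hypothesis hf : alg_hom f.
Lemma ah_lin : lin f. Proof. by case: hf. Qed.
Lemma ah1 : f 1 = 1. Proof. by case: hf => _ []. Qed.
Lemma ahM x y : f (x * y) = f x * f y. Proof. by case: hf => _ []. Qed.
End AlgebraMorphisms.

Section Span.
Variables (k : fieldType) (V : lmodType k).

Inductive span (P : V -> Prop) : V -> Prop :=
| span0 : span P 0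
| spanA a t u : P t -> span P u -> span P (a *: t + u).

Lemma span_gen (P : V -> Prop) t : P t -> span P t.
Proof. by move=> h; rewrite -[t]scale1r -[_ *: t]addr0; apply: spanA => //; apply: span0. Qed.

Lemma span_add (P : V -> Prop) t u : span P t -> span P u -> span P (t + u).
Proof.
by elim=> [|a x y hx _ IH] hu; rewrite ?add0r // -addrA; apply: spanA => //; apply: IH.
Qed.

Lemma span_scale (P : V -> Prop) a t : span P t -> span P (a *: t).
Proof.
elim=> [|b x y hx _ IH]; first by rewrite scaler0; apply: span0.
by rewrite scalerDr scalerA; apply: spanA.
Qed.

Lemma span_mono (P Q : V -> Prop) t : (forall x, P x -> Q x) -> span P t -> span Q t.
Proof. by move=> H; elim=> [|a x y hx _ IH]; [apply: span0 | apply: spanA => //; apply: H]. Qed.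

Lemma span_ext (W : lmodType k) (P : V -> Prop) (f g : V -> W) : lin f -> lin g ->
  (forall x, P x -> f x = g x) -> forall t, span P t -> f t = g t.
Proof.
move=> hf hg H t; elim=> [|a x y hx _ IH]; first by rewrite (lin0 hf) (lin0 hg).
by rewrite hf hg H // IH.
Qed.
End Span.

Lemma span_map (k : fieldType) (V W : lmodType k) (P : V -> Prop) (Q : W -> Prop)
    (f : V -> W) :
  lin f -> (forall x, P x -> span Q (f x)) -> forall t, span P t -> span Q (f t).
Proof.
move=> hf H t; elim=> [|a x y hx _ IH]; first by rewrite (lin0 hf); apply: span0.
by rewrite hf; apply: span_add => //; apply: span_scale; apply: H.
Qed.

Lemma span_mul (k : fieldType) (A : algType k) (P Q R : A -> Prop) :
  (forall x y, P x -> Q y -> span R (x * y)) ->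
  forall x y, span P x -> span Q y -> span R (x * y).
Proof.
move=> H x y hx hy; move: x hx; apply: span_map.
  by move=> a u v; rewrite mulrDl -scalerAl.
move=> x px; move: y hy; apply: span_map; first by move=> a u v; rewrite mulrDr -scalerAr.
by move=> y0 qy; apply: H.
Qed.

Section GeneratedSubalgebra.
Variables (k : fieldType) (A : algType k) (G : A -> Prop).

Lemma in_alg_gen0 : in_alg_gen G 0.
Proof. by rewrite -(addNr (1 : A)) -scaleN1r; apply: iag_lin; apply: iag_one. Qed.
Lemma in_alg_genD x y : in_alg_gen G x -> in_alg_gen G y -> in_alg_gen G (x + y).
Proof. by move=> hx hy; rewrite -[x]scale1r; apply: iag_lin. Qed.
Lemma in_alg_genZ a x : in_alg_gen G x -> in_alg_gen G (a *: x).
Proof. by move=> hx; rewrite -[_ *: _]addr0; apply: iag_lin => //; apply: in_alg_gen0. Qed.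
End GeneratedSubalgebra.

Section TensorProduct.
Variables (k : fieldType) (U T : algType k) (i1 i2 : U -> T).
Hypothesis HT : is_tensor i1 i2.

Lemma i1_ah : alg_hom i1. Proof. by case: HT. Qed.
Lemma i2_ah : alg_hom i2. Proof. by case: HT => _ []. Qed.
Lemma i12C a b : i1 a * i2 b = i2 b * i1 a. Proof. by case: HT => _ [_ []]. Qed.

Lemma i1i2_1 : i1 1 * i2 1 = 1.
Proof. by rewrite (ah1 i1_ah) (ah1 i2_ah) mulr1. Qed.

Lemma pure_mul a b c d : i1 a * i2 b * (i1 c * i2 d) = i1 (a * c) * i2 (b * d).
Proof. by rewrite (ahM i1_ah) (ahM i2_ah) -!mulrA; congr (_ * _); rewrite !mulrA i12C. Qed.

Lemma tensor_lift (V : lmodType k) (f : U -> U -> V) :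
  (forall a x y z, f (a *: x + y) z = a *: f x z + f y z) ->
  (forall a x y z, f z (a *: x + y) = a *: f z x + f z y) ->
  exists g : T -> V, lin g /\ forall a b, g (i1 a * i2 b) = f a b.
Proof. by case: HT => _ [_ [_ H]] /H/[apply] [[g [lg pg _]]]; exists g. Qed.

Lemma tensor_ext (V : lmodType k) (g g' : T -> V) : lin g -> lin g' ->
  (forall a b, g (i1 a * i2 b) = g' (i1 a * i2 b)) -> forall t, g t = g' t.
Proof.
move=> hg hg' H t; case: HT => _ [_ [_ HU]].
have b1 a x y z : g (i1 (a *: x + y) * i2 z) = a *: g (i1 x * i2 z) + g (i1 y * i2 z).
  by rewrite (ah_lin i1_ah) mulrDl -scalerAl; apply: hg.
have b2 a x y z : g (i1 z * i2 (a *: x + y)) = a *: g (i1 z * i2 x) + g (i1 z * i2 y).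
  by rewrite (ah_lin i2_ah) mulrDr -scalerAr; apply: hg.
have [G [_ _ uniqG]] := HU V (fun a b => g (i1 a * i2 b)) b1 b2.
by rewrite (uniqG g hg (fun a b => erefl)) (uniqG g' hg' (fun a b => esym (H a b))).
Qed.

Lemma tensor_map (f g : U -> U) : lin f -> lin g ->
  exists h : T -> T, lin h /\ forall a b, h (i1 a * i2 b) = i1 (f a) * i2 (g b).
Proof.
move=> hf hg; apply: tensor_lift => a x y z.
  by rewrite hf (ah_lin i1_ah) mulrDl -scalerAl.
by rewrite hg (ah_lin i2_ah) mulrDr -scalerAr.
Qed.

Variables (S : U -> U) (adT : U -> T -> U).
Hypothesis HS1 : S 1 = 1.
Hypothesis HSM : forall x y, S (x * y) = S y * S x.
Hypothesis Had : adT_spec i1 i2 S adT.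

Lemma adT_lin u : lin (adT u). Proof. by case: (Had u). Qed.
Lemma adT_pure u a b : adT u (i1 a * i2 b) = a * u * S b. Proof. by case: (Had u). Qed.

Lemma adT_linu a u u' t : adT (a *: u + u') t = a *: adT u t + adT u' t.
Proof.
move: t; apply: tensor_ext => [|b x y|x y]; first exact: adT_lin.
  by rewrite !(linD (adT_lin _)) !(linZ (adT_lin _)) scalerDr !scalerA mulrC; lincomb k.
by rewrite !adT_pure mulrDr mulrDl -scalerAr -scalerAl.
Qed.

Lemma adT_1 u : adT u 1 = u.
Proof. by rewrite -i1i2_1 adT_pure HS1 mulr1 mul1r. Qed.

Lemma adT_comp u t t' : adT (adT u t') t = adT u (t * t').
Proof.
have lin_r t0 : lin (fun t => adT u (t * t0)).
  by move=> a x y /=; rewrite mulrDl -scalerAl (adT_lin u).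
have pure_r c d s : adT (adT u (i1 c * i2 d)) s = adT u (s * (i1 c * i2 d)).
  move: s; apply: tensor_ext; [exact: adT_lin | exact: lin_r | ].
  by move=> a b; rewrite pure_mul !adT_pure HSM !mulrA.
move: t'; apply: tensor_ext => [a x y|a x y|c d]; last exact: pure_r.
  by rewrite (adT_lin u) adT_linu.
by rewrite mulrDr -scalerAr (adT_lin u).
Qed.
End TensorProduct.

Section SerreIdentities.
Variables (k : fieldType) (A : algType k) (q : k).
Hypothesis hq : q != 0.
Hypothesis hqq : q + q^-1 != 0.

Local Ltac expand :=
  repeat progress rewrite ?(mulrDr, mulrDl, mulrBr, mulrBl, mulrN, mulNr)
                          -?scalerAl -?scalerAr ?scalerA ?mulrA.

Definition serre (x y : A) := x * x * y + y * x * x = (q + q^-1) *: (x * y * x).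

Lemma qbr_scale (a b : k) (x y : A) : qbr q (a *: x) (b *: y) = (a * b) *: qbr q x y.
Proof. by rewrite /qbr -!scalerAl -!scalerAr !scalerA; lincomb k. Qed.

Lemma qbr_comm (z x y : A) : z * x = x * z -> z * y = y * z -> z * qbr q x y = qbr q x y * z.
Proof.
move=> h1 h2; rewrite /qbr mulrBr mulrBl -scalerAr -scalerAl.
by rewrite !mulrA h1 -!mulrA h2 !mulrA h2 -!mulrA h1.
Qed.

Lemma serre_of_qbr x y : x * qbr q x y = q *: (qbr q x y * x) -> serre x y.
Proof.
rewrite /qbr mulrBr mulrBl -scalerAr -scalerAl scalerBr scalerA mulfV // scale1r.
rewrite !mulrA => H; rewrite /serre -[x * x * y](subrK (q^-1 *: (x * y * x))) H.
by rewrite scalerDl addrAC subrK.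
Qed.

Lemma serre_qbr_swap x y : serre x y -> x * qbr q y x = q^-1 *: (qbr q y x * x).
Proof.
rewrite /serre /qbr => H.
rewrite mulrBr mulrBl -scalerAr -scalerAl scalerBr scalerA !mulrA.
have -> : x * x * y = (q + q^-1) *: (x * y * x) - y * x * x by rewrite -H addrK.
rewrite scalerBr scalerA opprB addrA addrAC.
have -> : x * y * x - (q^-1 * (q + q^-1)) *: (x * y * x) = - ((q^-1 * q^-1) *: (x * y * x)).
  rewrite -{1}[x * y * x]scale1r -scalerBl -scaleNr; congr (_ *: _).
  by rewrite mulrDr mulVf // opprD addrA subrr sub0r.
by rewrite addrC.
Qed.

Lemma serre_lin x a y1 y2 : serre x y1 -> serre x y2 -> serre x (a *: y1 + y2).
Proof.
rewrite /serre => H1 H2; expand.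
by rewrite scalerDr scalerA mulrC -scalerA -H1 -H2 scalerDr addrACA.
Qed.

Lemma serre_scale x a y : serre x y -> serre x (a *: y).
Proof.
move=> H; rewrite -[a *: y]addr0; apply: serre_lin => //.
by rewrite /serre !(mulr0, mul0r) scaler0 addr0.
Qed.

Lemma serre_mull x w y : x * w = w * x -> serre x y -> serre x (w * y).
Proof.
rewrite /serre => C H.
have cL z : x * (w * z) = w * (x * z) by rewrite mulrA C -mulrA.
have e1 : x * x * (w * y) = w * (x * x * y) by rewrite -mulrA cL cL !mulrA.
have e2 : x * (w * y) * x = w * (x * y * x) by rewrite cL -!mulrA.
have e3 : w * y * x * x = w * (y * x * x) by rewrite -!mulrA.
by rewrite e1 e2 e3 -mulrDr H -scalerAr.
Qed.

Lemma serre_mulr x w y : x * w = w * x -> serre x y -> serre x (y * w).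
Proof.
rewrite /serre => C H.
have cR z : z * x * w = z * w * x by rewrite -mulrA C mulrA.
have e1 : x * x * (y * w) = x * x * y * w by rewrite !mulrA.
have e2 : y * w * x * x = y * x * x * w by rewrite cR cR.
have e3 : x * (y * w) * x = x * y * x * w by rewrite mulrA cR.
by rewrite e1 e2 e3 -mulrDl H -scalerAl.
Qed.

Lemma serre_qbr x w y : x * w = w * x -> serre x y -> serre x (qbr q w y).
Proof.
move=> C H; rewrite /qbr -[w * y]scale1r -scaleNr.
by apply: serre_lin; [exact: serre_mull | apply: serre_scale; exact: serre_mulr].
Qed.

Lemma serre_double_qbr a b w : w * b = b * w -> serre a b -> serre a w ->
  a * qbr q (qbr q w a) b = qbr q (qbr q w a) b * a.
Proof.
move=> C Hb Hw; rewrite /serre in Hb Hw.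
have cmR y : y * w * b = y * b * w by rewrite -mulrA C mulrA.
have Sb : b * a * a = (q + q^-1) *: (a * b * a) - a * a * b by rewrite -Hb addrC addKr.
have Sw : w * a * a = (q + q^-1) *: (a * w * a) - a * a * w by rewrite -Hw addrC addKr.
have e1 : w * a * a * b = (q + q^-1) *: (a * w * a * b) - a * a * b * w.
  by rewrite Sw mulrBl -scalerAl cmR.
have e2 : b * a * a * w = (q + q^-1) *: (a * b * a * w) - a * a * b * w.
  by rewrite Sb mulrBl -scalerAl.
have awab : a * w * a * b = w * a * b * a - b * a * w * a + a * b * a * w.
  have E1 : w * (b * a * a) = b * (w * a * a) by rewrite !mulrA C.
  rewrite Sb Sw !mulrBr -!scalerAr !mulrA e1 e2 in E1.
  apply: (@scalerI _ _ (q + q^-1)) => //.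
  have -> : (q + q^-1) *: (a * w * a * b) = (q + q^-1) *: (w * a * b * a)
    - ((q + q^-1) *: (w * a * b * a) - ((q + q^-1) *: (a * w * a * b) - a * a * b * w))
    + a * a * b * w by lincomb k.
  rewrite E1; lincomb k.
have m1 : a * w * b * a = a * b * w * a by rewrite cmR.
have m2 : b * w * a * a = (q + q^-1) *: (b * a * w * a)
                          - ((q + q^-1) *: (a * b * a * w) - a * a * b * w).
  by rewrite -e2 -(mulrA b w) -(mulrA b (w * a)) Sw mulrBr -scalerAr !mulrA.
have m3 : a * a * w * b = a * a * b * w by rewrite cmR.
rewrite /qbr; expand; rewrite awab m1 m2 m3; lincomb k.
all: by field.
Qed.
End SerreIdentities.

Section EigenProjector.
Variables (k : fieldType) (V : lmodType k) (theta : V -> V) (lam : k).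
Hypothesis theta_lin : lin theta.
Hypothesis lam_not_root1 : forall e, (0 < e)%N -> lam ^+ e != 1.

Definition eigen_step e x := (1 - lam ^+ e)^-1 *: (theta x - lam ^+ e *: x).
Fixpoint eigen_proj D x := if D is D'.+1 then eigen_step D'.+1 (eigen_proj D' x) else x.

Lemma eigen_proj_lin D : lin (eigen_proj D).
Proof.
elim: D => [|D IH] a x y //=; rewrite IH /eigen_step theta_lin.
by rewrite !scalerBr !scalerDr !scalerA; lincomb k.
Qed.

Lemma eigen_proj_eigvec D d x : theta x = lam ^+ d *: x -> (d <= D)%N ->
  eigen_proj D x = if d == 0%N then x else 0.
Proof.
move=> hx; have : exists c, [/\ eigen_proj D x = c *: x, d = 0%N -> c = 1
                                & (0 < d <= D)%N -> c = 0].
  elim: D => [|D [c [IH1 IH2 IH3]]] /=.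
    by exists 1; split=> [|//|/andP [h1]]; rewrite ?scale1r // leqNgt h1.
  exists ((1 - lam ^+ D.+1)^-1 * c * (lam ^+ d - lam ^+ D.+1)); split.
  - by rewrite IH1 /eigen_step (linZ theta_lin) hx !scalerA; lincomb k.
  - move=> d0; rewrite IH2 // d0 expr0 mulr1 mulVf //.
    by rewrite subr_eq0 eq_sym lam_not_root1.
  - case/andP=> d0; rewrite leq_eqVlt => /orP [/eqP ->|hd]; first by rewrite subrr mulr0.
    by rewrite IH3 ?mulr0 ?mul0r // d0.
case=> c [-> c1 c2] hd; case: eqP => [/c1 ->|/eqP d0]; first by rewrite scale1r.
by rewrite c2 ?scale0r // lt0n d0.
Qed.
End EigenProjector.

Section RootLattice.
Variable m : nat.
Implicit Types x y : QA m.

Lemma latofK (v : 'rV[int]_m.+1) : \sum_i v ord0 i == 0 -> val (latof v) = v.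
Proof. by move=> H; rewrite /latof insubdK. Qed.

Lemma sumQA x : \sum_i val x ord0 i = 0.
Proof. by apply/eqP; case: x. Qed.

Lemma val_latopp x : val (latopp x) = - val x.
Proof.
rewrite /latopp latofK // (eq_bigr (fun i => - val x ord0 i)) => [|i _]; last by rewrite mxE.
by rewrite sumrN sumQA oppr0.
Qed.

Lemma val_latadd x y : val (latadd x y) = val x + val y.
Proof.
rewrite /latadd latofK //.
rewrite (eq_bigr (fun i => val x ord0 i + val y ord0 i)) => [|i _]; last by rewrite mxE.
by rewrite big_split /= !sumQA addr0.
Qed.

Lemma latadd_opp x : latadd x (latopp x) = lat0 m.
Proof. by apply: val_inj; rewrite val_latadd val_latopp subrr. Qed.
Lemma latopp_add x : latadd (latopp x) x = lat0 m.
Proof. by apply: val_inj; rewrite val_latadd val_latopp addNr. Qed.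
Lemma lataddC x y : latadd x y = latadd y x.
Proof. by apply: val_inj; rewrite !val_latadd addrC. Qed.
Lemma latoppK x : latopp (latopp x) = x.
Proof. by apply: val_inj; rewrite !val_latopp opprK. Qed.

Lemma lpair_oppl x y : lpair (latopp x) y = - lpair x y.
Proof. by rewrite /lpair -sumrN; apply: eq_bigr => i _; rewrite val_latopp mxE mulNr. Qed.

Lemma sum_delta (a : 'I_m.+1) (f : 'I_m.+1 -> int) : \sum_r f r * (r == a)%:R = f a.
Proof. by rewrite (bigD1 a) //= eqxx mulr1 big1 ?addr0 // => r /negbTE ->; rewrite mulr0. Qed.

Lemma val_alpha (i : 'I_m) (r : 'I_m.+1) :
  val (alpha i) ord0 r = (r == widen_ord (leqnSn m) i)%:R - (r == lift ord0 i)%:R.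
Proof.
rewrite /alpha latofK; first by rewrite !mxE /= !(eq_sym r).
rewrite (eq_bigr (fun r => 1 * (r == widen_ord (leqnSn m) i)%:R
                           - 1 * (r == lift ord0 i)%:R)); first by rewrite sumrB !sum_delta subrr.
by move=> r0 _; rewrite !mxE /= !mul1r !(eq_sym r0).
Qed.

Lemma lpair_alpha x (i : 'I_m) :
  lpair x (alpha i) = val x ord0 (widen_ord (leqnSn m) i) - val x ord0 (lift ord0 i).
Proof.
rewrite /lpair (eq_bigr (fun r => val x ord0 r * (r == widen_ord (leqnSn m) i)%:R
                                 - val x ord0 r * (r == lift ord0 i)%:R)).
  by rewrite sumrB !sum_delta.
by move=> r _; rewrite val_alpha mulrBr.
Qed.

Lemma lpair_aa (i j : 'I_m) : lpair (alpha i) (alpha j) =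
  if i == j then 2 else if ((j : nat) == i.+1) || ((i : nat) == j.+1) then -1 else 0.
Proof.
rewrite lpair_alpha !val_alpha -!val_eqE /= /bump /= !add1n.
case: (eqVneq (i : nat) j) => [ij|nij].
  by rewrite ij eqxx (gtn_eqF (ltnSn j)) (ltn_eqF (ltnSn j)).
rewrite eqSS (eq_sym (j : nat) i) (negbTE nij) /=.
case: ((j : nat) =P i.+1) => [->|_]; first by rewrite (gtn_eqF (leqnSn i.+1)).
by case: ((j.+1 : nat) =P i) => [<-|/eqP ne]; rewrite ?eqxx /= // eq_sym (negbTE ne).
Qed.

(* The weight mu0 = (m, -1, ..., -1): it pairs to m+1 with alpha 0 (the
   paper's alpha_1) and to 0 with the other simple roots, so conjugation by
   K_mu0 counts the factors E 0. *)
Definition mu0 : QA m := latof (\row_r (if r == ord0 then (m : int) else -1)).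

Lemma lpair_mu0 (l : 'I_m) : lpair mu0 (alpha l) = if val l == 0%N then (m.+1 : int) else 0.
Proof.
have sum0 : \sum_i (\row_r (if r == ord0 then (m : int) else -1) : 'rV_m.+1) ord0 i == 0.
  rewrite big_ord_recl !mxE eqxx (eq_bigr (fun _ => -1)) => [|i _].
    by rewrite sumr_const card_ord mulNrn -natz subrr.
  by rewrite mxE eq_sym (negbTE (neq_lift _ _)).
rewrite lpair_alpha /mu0 latofK // !mxE [lift _ _ == _]eq_sym (negbTE (neq_lift _ _)).
rewrite -val_eqE /=; case: eqP => _ /=; last by rewrite subrr.
by rewrite opprK -addn1 PoszD.
Qed.
End RootLattice.

Section QuantumGroup.
Variables (k : fieldType) (q : k) (m : nat) (U : algType k).
Variables (E F : 'I_m -> U) (K : QA m -> U).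
Hypotheses (hq : q != 0) (HU : is_Uq q E F K).

Lemma K0 : K (lat0 m) = 1. Proof. by case: HU => [[]]. Qed.
Lemma KK mu la : K mu * K la = K (latadd mu la). Proof. by case: HU => [[_ []]]. Qed.
Lemma KE mu i : K mu * E i = q ^ lpair mu (alpha i) *: (E i * K mu).
Proof. by case: HU => [[_ [_ []]]]. Qed.
Lemma E_comm i j : (lpair (alpha i) (alpha j) == 0) || (lpair (alpha i) (alpha j) == 2) ->
  E i * E j = E j * E i.
Proof. by case: HU => [[_ [_ [_ [_ [H _]]]]]] _ /H []. Qed.
Lemma E_serre i j : lpair (alpha i) (alpha j) = -1 ->
  E i * qbr q (E i) (E j) = q *: (qbr q (E i) (E j) * E i).
Proof. by case: HU => [[_ [_ [_ [_ [_ [H _]]]]]]] _ /H []. Qed.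

Lemma KKV mu : K mu * K (latopp mu) = 1. Proof. by rewrite KK latadd_opp K0. Qed.
Lemma KVK mu : K (latopp mu) * K mu = 1. Proof. by rewrite KK latopp_add K0. Qed.

Definition conjK mu (x : U) := K mu * x * K (latopp mu).

Lemma conjK_lin mu : lin (conjK mu).
Proof. by move=> a x y; rewrite /conjK mulrDr mulrDl -scalerAr -scalerAl. Qed.
Lemma conjK_mul mu x y : conjK mu (x * y) = conjK mu x * conjK mu y.
Proof. by rewrite /conjK !mulrA -(mulrA _ (K (latopp mu))) KVK mulr1. Qed.
Lemma conjK1 mu : conjK mu 1 = 1. Proof. by rewrite /conjK mulr1 KKV. Qed.
Lemma conjK_E mu i : conjK mu (E i) = q ^ lpair mu (alpha i) *: E i.
Proof. by rewrite /conjK KE -scalerAl -mulrA KKV mulr1. Qed.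
Lemma conjK_K mu nu : conjK mu (K nu) = K nu.
Proof. by rewrite /conjK KK lataddC -KK -mulrA KKV mulr1. Qed.
Lemma conjK_qbr mu x y : conjK mu (qbr q x y) = qbr q (conjK mu x) (conjK mu y).
Proof. by rewrite /qbr (linB (conjK_lin mu)) (linZ (conjK_lin mu)) !conjK_mul. Qed.

Hypothesis q_not_root1 : forall n : nat, (0 < n)%N -> q ^+ n != 1.

Lemma qqV_neq0 : q + q^-1 != 0.
Proof.
apply/negP => /eqP h.
have q2 : q ^+ 2 = -1.
  have : q * (q + q^-1) = 0 by rewrite h mulr0.
  by rewrite mulrDr mulfV // expr2 => /eqP; rewrite addr_eq0 => /eqP.
have := q_not_root1 (n := 4) isT.
by rewrite (_ : 4%N = (2 * 2)%N) // exprM q2 expr2 mulrNN mulr1 eqxx.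
Qed.

(* Indices are 0-based as in Defs (E 0 is the paper's E_1).
   [Enat n] is E n for a natural number n < m, and [zrec] the iterated
   q-brackets z_0 = E_0, z_(j+1) = [z_j, E_(j+1)]. *)
Hypothesis hm : (1 < m)%N.

Definition ord_of n : 'I_m := insubd (Ordinal (ltnW hm)) n.
Lemma val_ord_of n : (n < m)%N -> val (ord_of n) = n.
Proof. by move=> h; rewrite /ord_of val_insubd h. Qed.
Lemma ord_of_val (i : 'I_m) : ord_of i = i.
Proof. by apply: val_inj; rewrite val_ord_of. Qed.

Definition Enat n := E (ord_of n).
Fixpoint zrec n := if n is n'.+1 then qbr q (zrec n') (Enat n) else Enat 0.

Lemma lpair_nat i j : (i < m)%N -> (j < m)%N ->
  lpair (alpha (ord_of i)) (alpha (ord_of j)) =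
  if i == j then 2 else if (j == i.+1) || (i == j.+1) then -1 else 0.
Proof. by move=> hi hj; rewrite lpair_aa -val_eqE !val_ord_of. Qed.

Lemma Enat_comm i j : (i < m)%N -> (j < m)%N -> i != j -> j != i.+1 -> i != j.+1 ->
  Enat i * Enat j = Enat j * Enat i.
Proof.
move=> hi hj h1 h2 h3; apply: E_comm.
by rewrite lpair_nat // (negbTE h1) (negbTE h2) (negbTE h3).
Qed.

Lemma Enat_serre i j : (i < m)%N -> (j < m)%N -> (j == i.+1) || (i == j.+1) ->
  serre q (Enat i) (Enat j).
Proof.
move=> hi hj h; apply: (serre_of_qbr hq); apply: E_serre.
rewrite lpair_nat // h; case: eqP => // e.
by move: h; rewrite e (ltn_eqF (ltnSn j)).
Qed.

Lemma conjK_zrec mu j : exists s, conjK mu (zrec j) = s *: zrec j.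
Proof.
elim: j => [|j [s IH]] /=; first by eexists; rewrite /Enat conjK_E.
by eexists; rewrite conjK_qbr IH /Enat conjK_E qbr_scale.
Qed.

(* Commutation of E_i with z_j: they commute if i >= j + 2 or 0 < i < j
   (the latter by the Serre relations), and E_j q-commutes with z_j. *)
Lemma Enat_zrec_far i j : (j.+2 <= i)%N -> (i < m)%N -> Enat i * zrec j = zrec j * Enat i.
Proof.
elim: j => [|j IH] h hi /=; first by apply: Enat_comm; lia.
by apply: qbr_comm; [apply: IH | apply: Enat_comm]; lia.
Qed.

Lemma Enat_zrec_serre j : (j.+1 < m)%N -> serre q (Enat j.+1) (zrec j).
Proof.
case: j => [|j] h /=; first by apply: Enat_serre; lia.
apply: serre_qbr; first by apply: Enat_zrec_far; lia.
by apply: Enat_serre; rewrite ?eqxx ?orbT //; lia.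
Qed.

Lemma Enat_zrec_next j : (j.+1 < m)%N ->
  Enat j.+1 * zrec j.+1 = q^-1 *: (zrec j.+1 * Enat j.+1).
Proof. by move=> h; apply: (serre_qbr_swap hq); apply: Enat_zrec_serre. Qed.

Lemma Enat_zrec_mid i j : (0 < i)%N -> (i < j)%N -> (j < m)%N ->
  Enat i * zrec j = zrec j * Enat i.
Proof.
move=> i0; elim: j => [//|j IH] h hj.
case: (eqVneq i j) => [ei|nij]; last first.
  by apply: qbr_comm; [apply: IH | apply: Enat_comm]; lia.
subst i; case: j IH i0 hj h => [//|j] _ _ hj _ /=.
apply: (serre_double_qbr hq qqV_neq0); first by apply/esym/Enat_zrec_far; lia.
  by apply: Enat_serre; rewrite ?eqxx //; lia.
by apply: Enat_zrec_serre; lia.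
Qed.

Definition conj_coef (i j : nat) : k :=
  if i == j then q^-1 else if i == j.+1 then q else 1.

Ltac decide_nat_eqs :=
  repeat match goal with
  | |- context [@eq_op ?T ?a ?b] =>
      let TT := eval hnf in (Equality.sort T) in
      lazymatch TT with nat =>
      first [ rewrite (_ : (a == b) = true); last (apply/eqP; lia)
            | rewrite (_ : (a == b) = false); last (apply/eqP; lia) ] end
  end.

Lemma conjK_alpha_zrec i j : (0 < i < m)%N -> (j < m)%N ->
  conjK (latopp (alpha (ord_of i))) (zrec j) = conj_coef i j *: zrec j.
Proof.
move=> /andP [i0 im]; elim: j => [|j IH] hj /=.
  rewrite /Enat conjK_E lpair_oppl lpair_nat // /conj_coef.
  case: (eqVneq i 1) => [->|ne1] /=; first by rewrite opprK expr1z.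
  by decide_nat_eqs; rewrite oppr0 expr0z.
rewrite conjK_qbr IH; last lia.
rewrite /Enat conjK_E lpair_oppl lpair_nat // qbr_scale; congr (_ *: _).
rewrite /conj_coef; case: (eqVneq i j) => [ij|nij]; first subst i.
  by decide_nat_eqs; rewrite opprK expr1z mulVf.
case: (eqVneq i j.+1) => [ij|nij1]; first subst i.
  by decide_nat_eqs; rewrite -exprnN expr2 invfM mulrA mulfV // mul1r.
case: (eqVneq i j.+2) => [ij|nij2]; first subst i.
  by decide_nat_eqs; rewrite opprK expr1z mul1r.
by decide_nat_eqs; rewrite oppr0 expr0z mulr1.
Qed.

Variable Tl : 'I_m -> U -> U.
Hypothesis HL : lusztig q E F K Tl.

Lemma Tl_ah i : alg_hom (Tl i). Proof. by case: (HL i). Qed.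
Lemma Tl_E0 i j : lpair (alpha i) (alpha j) = 0 -> Tl i (E j) = E j.
Proof. by case: (HL i) => _ [_ [_ [H _]]]; apply: H. Qed.
Lemma Tl_E1 i j : lpair (alpha i) (alpha j) = -1 ->
  Tl i (E j) = E i * E j - q^-1 *: (E j * E i).
Proof. by case: (HL i) => _ [_ [_ [_ H]]]; apply: H. Qed.

Definition lusztig_prefix n x :=
  foldr (fun i x => Tl i x) x [seq i <- enum 'I_m | (val i < n)%N].

Lemma lusztig_prefix_mul n x y :
  lusztig_prefix n (x * y) = lusztig_prefix n x * lusztig_prefix n y.
Proof. by rewrite /lusztig_prefix; elim: (filter _ _) => //= i s ->; rewrite (ahM (Tl_ah i)). Qed.
Lemma lusztig_prefix_lin n : lin (lusztig_prefix n).
Proof.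
by rewrite /lusztig_prefix; elim: (filter _ _) => //= i s IH a x y; rewrite IH (ah_lin (Tl_ah i)).
Qed.

Lemma lusztig_prefix0 x : lusztig_prefix 0 x = x.
Proof. by rewrite /lusztig_prefix (eq_filter (a2 := pred0)) ?filter_pred0. Qed.

Lemma lusztig_prefixS n x : (n < m)%N ->
  lusztig_prefix n.+1 x = lusztig_prefix n (Tl (ord_of n) x).
Proof.
move=> h; rewrite /lusztig_prefix -foldr_rcons; congr foldr.
apply: (inj_map val_inj); rewrite map_rcons val_ord_of //.
rewrite -!(filter_map val (fun x => (x < _)%N)) val_enum_ord.
have iota_lt p : (p <= m)%N -> [seq x <- iota 0 m | (x < p)%N] = iota 0 p.
  move=> hp; rewrite -(subnKC hp) iotaD filter_cat add0n.
  rewrite (eq_in_filter (a2 := pred0) (s := iota p (m - p))) => [|r]; last first.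
    by rewrite mem_iota => /andP [h1 _] /=; rewrite ltnNge h1.
  rewrite filter_pred0 cats0; apply/all_filterP/allP => r.
  by rewrite mem_iota add0n => /andP [].
by rewrite !iota_lt // ?(ltnW h) // -addn1 iotaD cats1.
Qed.

Lemma lusztig_prefix_E n j : (n < j)%N -> (j < m)%N -> lusztig_prefix n (Enat j) = Enat j.
Proof.
elim: n => [|n IH] h hj; first by rewrite lusztig_prefix0.
rewrite lusztig_prefixS; last lia.
rewrite /Enat Tl_E0; first by rewrite -/(Enat j) IH //; lia.
by rewrite lpair_nat; [decide_nat_eqs | lia | lia].
Qed.

Lemma zgen_zrec (j : 'I_m) : zgen E Tl j = zrec j.
Proof.
have -> : zgen E Tl j = lusztig_prefix j (Enat j) by rewrite /Enat ord_of_val.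
case: j => n /= hn; elim: n hn => [|n IH] hn; first by rewrite lusztig_prefix0.
rewrite lusztig_prefixS ?(ltnW hn) // /Enat Tl_E1; last first.
  by rewrite lpair_nat; [decide_nat_eqs | lia | lia].
rewrite -/(Enat n) -/(Enat n.+1) (linB (lusztig_prefix_lin n)).
rewrite (linZ (lusztig_prefix_lin n)) !lusztig_prefix_mul IH; last lia.
by rewrite lusztig_prefix_E.
Qed.

Lemma Ucm_zrec j : (j < m)%N -> Ucm E Tl (zrec j).
Proof. by move=> h; apply: iag_gen; exists (ord_of j); rewrite zgen_zrec val_ord_of. Qed.

Lemma conjK_Ucm mu v : Ucm E Tl v -> Ucm E Tl (conjK mu v).
Proof.
elim=> [g [j ->]| |a x y _ IH1 _ IH2|x y _ IH1 _ IH2].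
- by rewrite zgen_zrec; case: (conjK_zrec mu j) => s ->; apply/in_alg_genZ/Ucm_zrec.
- by rewrite conjK1; apply: iag_one.
- by rewrite (conjK_lin mu); apply: iag_lin.
- by rewrite conjK_mul; apply: iag_mul.
Qed.

Variables (T : algType k) (i1 i2 Delta : U -> T) (S : U -> U) (adT : U -> T -> U).
Hypotheses (HT : is_tensor i1 i2) (HD : Uq_coproduct E F K i1 i2 Delta)
           (HS : Uq_antipode E K S) (Had : adT_spec i1 i2 S adT).

Lemma Delta_ah : alg_hom Delta. Proof. by case: HD. Qed.
Lemma Delta_E i : Delta (E i) = i1 (K (latopp (alpha i))) * i2 (E i) + i1 (E i) * i2 1.
Proof. by case: HD => _ [-> _]; rewrite (ah1 (i2_ah HT)) mulr1. Qed.
Lemma Delta_K mu : Delta (K mu) = i1 (K mu) * i2 (K mu). Proof. by case: HD => _ [_ []]. Qed.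
Lemma S1 : S 1 = 1. Proof. by case: HS => _ []. Qed.
Lemma SM x y : S (x * y) = S y * S x. Proof. by case: HS => _ [_ []]. Qed.
Lemma S_E i : S (E i) = - (K (alpha i) * E i). Proof. by case: HS => _ [_ [_ []]]. Qed.
Lemma S_K mu : S (K mu) = K (latopp mu). Proof. by case: HS => _ [_ [_ []]]. Qed.

Definition ad h u := adT u (Delta h).

Lemma ad_linh a h h' u : ad (a *: h + h') u = a *: ad h u + ad h' u.
Proof. by rewrite /ad (ah_lin Delta_ah) (adT_lin Had). Qed.
Lemma ad_lin h : lin (ad h).
Proof. by move=> a x y; rewrite /ad (adT_linu HT Had). Qed.
Lemma ad1 u : ad 1 u = u.
Proof. by rewrite /ad (ah1 Delta_ah) (adT_1 HT S1 Had). Qed.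
Lemma ad_mul h h' u : ad (h * h') u = ad h (ad h' u).
Proof. by rewrite /ad (ahM Delta_ah) (adT_comp HT SM Had). Qed.
Lemma ad_K mu u : ad (K mu) u = conjK mu u.
Proof. by rewrite /ad Delta_K (adT_pure Had) S_K. Qed.
Lemma ad_E i u : ad (E i) u = E i * u - conjK (latopp (alpha i)) u * E i.
Proof.
rewrite /ad Delta_E (linD (adT_lin Had u)) !(adT_pure Had) S1 mulr1 S_E.
by rewrite /conjK latoppK mulrN !mulrA addrC.
Qed.

Lemma ad_E_mul i x y :
  ad (E i) (x * y) = conjK (latopp (alpha i)) x * ad (E i) y + ad (E i) x * y.
Proof.
rewrite !ad_E /conjK latoppK.
have hK u : u * K (alpha i) * K (latopp (alpha i)) = u by rewrite -mulrA KKV mulr1.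
by rewrite !mulrBr !mulrBl !mulrA hK; lincomb k.
Qed.

(* ad(E_i), i > 0, maps each z_j into U_q^(c_m): the result is 0 or a
   multiple of z_(j+1). *)
Lemma ad_E_zrec i j : (0 < i < m)%N -> (j < m)%N -> Ucm E Tl (ad (Enat i) (zrec j)).
Proof.
move=> hi hj; rewrite /Enat ad_E -/(Enat i) conjK_alpha_zrec // /conj_coef.
case: (eqVneq i j) => [ij|nij]; first subst i.
  case: j hi hj => [|j] hi hj; first by move: hi; rewrite ltnn.
  by rewrite Enat_zrec_next // -scalerAl subrr; apply: in_alg_gen0.
case: (eqVneq i j.+1) => [ij|nij1]; first subst i.
  have -> : Enat j.+1 * zrec j - q *: zrec j * Enat j.+1 = (- q) *: zrec j.+1.
    by rewrite /= /qbr -scalerAl; lincomb k; field.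
  by apply/in_alg_genZ/Ucm_zrec; lia.
rewrite scale1r; case: (ltnP i j) => h.
  by rewrite Enat_zrec_mid ?subrr; [apply: in_alg_gen0 | lia..].
by rewrite Enat_zrec_far ?subrr; [apply: in_alg_gen0 | lia..].
Qed.

Lemma ad_E_Ucm i v : (0 < i < m)%N -> Ucm E Tl v -> Ucm E Tl (ad (Enat i) v).
Proof.
move=> hi; elim=> [g [j ->]| |a x y _ IH1 _ IH2|x y hx IH1 hy IH2].
- by rewrite zgen_zrec; apply: ad_E_zrec => //; case: j.
- by rewrite /Enat ad_E conjK1 mulr1 mul1r subrr; apply: in_alg_gen0.
- by rewrite (ad_lin _); apply: iag_lin.
- rewrite /Enat ad_E_mul -/(Enat i); apply: in_alg_genD; apply: iag_mul => //.
  exact: conjK_Ucm.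
Qed.

(* The subalgebra generated by the E_i, i > 0, and the K_mu: the image of
   pi_A.  It acts on U_q^(c_m) through ad. *)
Definition Uge0_noE1 : U -> Prop :=
  in_alg_gen (fun x => (exists i : 'I_m, (0 < val i)%N /\ x = E i) \/ (exists mu, x = K mu)).

Lemma Uge0_noE1_Uge0 x : Uge0_noE1 x -> Uge0 E K x.
Proof.
elim=> [g [[i [_ ->]]|[mu ->]]| |a u v _ IH1 _ IH2|u v _ IH1 _ IH2].
- by apply: iag_gen; left; exists i.
- by apply: iag_gen; right; exists mu.
- exact: iag_one.
- exact: iag_lin.
- exact: iag_mul.
Qed.

Lemma ad_Uge0_noE1_Ucm x v : Uge0_noE1 x -> Ucm E Tl v -> Ucm E Tl (ad x v).
Proof.
move=> hx; elim: hx v => [g [[i [hi ->]]|[mu ->]]| |a u w _ IH1 _ IH2|u w _ IH1 _ IH2] v hv.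
- by rewrite -(ord_of_val i) -/(Enat i); apply: ad_E_Ucm => //; rewrite hi ltn_ord.
- by rewrite ad_K; apply: conjK_Ucm.
- by rewrite ad1.
- by rewrite ad_linh; apply: iag_lin; [apply: IH1 | apply: IH2].
- by rewrite ad_mul; apply: IH1; apply: IH2.
Qed.

Variables (pi : U -> U) (eps : U -> k).
Hypotheses (Hpi : piA_spec E K pi) (He : Uq_counit E K eps).

Lemma pi_lin x y a : Uge0 E K x -> Uge0 E K y -> pi (a *: x + y) = a *: pi x + pi y.
Proof. by case: Hpi => H _; apply: H. Qed.
Lemma pi_mul x y : Uge0 E K x -> Uge0 E K y -> pi (x * y) = pi x * pi y.
Proof. by case: Hpi => _ [H _]; apply: H. Qed.
Lemma pi1 : pi 1 = 1. Proof. by case: Hpi => _ [_ []]. Qed.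
Lemma pi_E i : pi (E i) = if val i == 0%N then 0 else E i.
Proof. by case: Hpi => _ [_ [_ []]]. Qed.
Lemma pi_K mu : pi (K mu) = K mu. Proof. by case: Hpi => _ [_ [_ []]]. Qed.
Lemma pi0 : pi 0 = 0.
Proof.
have := pi_lin 1 (in_alg_gen0 _) (in_alg_gen0 _) (x := 0) (y := 0).
by rewrite scaler0 addr0 scale1r => H; apply: (addrI (pi 0)); rewrite addr0 -H.
Qed.

Lemma pi_Uge0_noE1 h : Uge0 E K h -> Uge0_noE1 (pi h).
Proof.
elim=> [g [[i ->]|[mu ->]]| |a x y hx IH1 hy IH2|x y hx IH1 hy IH2].
- rewrite pi_E; case: eqP => [_|/eqP ne]; first exact: in_alg_gen0.
  by apply: iag_gen; left; exists i; rewrite lt0n.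
- by rewrite pi_K; apply: iag_gen; right; exists mu.
- by rewrite pi1; apply: iag_one.
- by rewrite pi_lin //; apply: iag_lin.
- by rewrite pi_mul //; apply: iag_mul.
Qed.

Lemma ad_one x : Uge0 E K x -> ad x 1 = eps x *: 1.
Proof.
case: He => eps_lin [eps1 [epsM [eps_E eps_K]]].
elim=> [g [[i ->]|[mu ->]]| |a u w _ IH1 _ IH2|u w _ IH1 _ IH2].
- by rewrite ad_E conjK1 mulr1 mul1r subrr eps_E scale0r.
- by rewrite ad_K conjK1 eps_K scale1r.
- by rewrite ad1 eps1 scale1r.
- by rewrite ad_linh IH1 IH2 eps_lin scalerA scalerDl.
- by rewrite ad_mul IH2 (linZ (ad_lin u)) IH1 scalerA epsM mulrC.
Qed.

Lemma eps_pi h : Uge0 E K h -> eps (pi h) = eps h.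
Proof.
case: He => eps_lin [eps1 [epsM [eps_E eps_K]]].
have eps0 : eps 0 = 0.
  have := eps_lin 1 0 0; rewrite scaler0 addr0 mul1r => H.
  by apply: (addrI (eps 0)); rewrite addr0 -H.
elim=> [g [[i ->]|[mu ->]]| |a u w hu IH1 hw IH2|u w hu IH1 hw IH2].
- by rewrite pi_E eps_E; case: eqP; rewrite ?eps0 ?eps_E.
- by rewrite pi_K.
- by rewrite pi1.
- by rewrite pi_lin // !eps_lin IH1 IH2.
- by rewrite pi_mul // !epsM IH1 IH2.
Qed.

Lemma ad_pair_lift v w :
  exists G : T -> U, lin G /\ forall a b, G (i1 a * i2 b) = ad a v * ad b w.
Proof.
by apply: (tensor_lift HT) => a x y z; rewrite ad_linh ?mulrDl ?mulrDr -?scalerAl -?scalerAr.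
Qed.

Lemma ad_mul_rule x : Uge0 E K x -> forall v w (G : T -> U), lin G ->
  (forall a b, G (i1 a * i2 b) = ad a v * ad b w) -> ad x (v * w) = G (Delta x).
Proof.
have Delta_lin := ah_lin Delta_ah.
elim=> [g [[i ->]|[mu ->]]| |a u u' _ IH1 _ IH2|u u' _ IH1 _ IH2] v w G hG HG.
- by rewrite Delta_E (linD hG) !HG ad1 ad_K ad_E_mul.
- by rewrite Delta_K HG !ad_K conjK_mul.
- by rewrite (ah1 Delta_ah) -(i1i2_1 HT) HG !ad1.
- by rewrite ad_linh Delta_lin hG (IH1 _ _ G) ?(IH2 _ _ G).
rewrite ad_mul (IH2 _ _ G) // (ahM Delta_ah).
(* ad u commutes with G up to left multiplication by Delta u *)
move: (Delta u'); apply: (tensor_ext HT).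
- by move=> a0 x0 y0; rewrite (linD hG) (linZ hG) (ad_lin u).
- by move=> a0 x0 y0; rewrite mulrDr -scalerAr hG.
move=> a b; rewrite HG; have [G' [hG' HG']] := ad_pair_lift (ad a v) (ad b w).
rewrite (IH1 _ _ G') //; move: (Delta u); apply: (tensor_ext HT) => //.
- by move=> c x0 y0; rewrite mulrDl -scalerAl hG.
- by move=> c d; rewrite HG' (pure_mul HT) HG !ad_mul.
Qed.

(* Grading of U^(>=0) by the number of factors E 0.  Conjugation by K_mu0 acts on
   elements of degree d by lam^d, lam = q^(m+1), and pi_A is the projection
   onto degree 0.  [homog d x]: x is homogeneous of degree d. *)
Definition lam := q ^+ m.+1.

Lemma lam_not_root1 e : (0 < e)%N -> lam ^+ e != 1.
Proof. by move=> he; rewrite /lam -exprM; apply: q_not_root1; rewrite muln_gt0. Qed.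

Definition homog d x :=
  [/\ Uge0 E K x, conjK (mu0 m) x = lam ^+ d *: x & pi x = if d == 0%N then x else 0].

Lemma homog_mul d e x y : homog d x -> homog e y -> homog (d + e) (x * y).
Proof.
case=> h1 h2 h3 [g1 g2 g3]; split; first exact: iag_mul.
- by rewrite conjK_mul h2 g2 -scalerAl -scalerAr scalerA exprD.
- rewrite pi_mul // h3 g3 addn_eq0.
  by case: eqP => _; case: eqP => _ /=; rewrite ?mulr0 ?mul0r.
Qed.

Lemma homog1 : homog 0 1.
Proof. by split; [apply: iag_one | rewrite conjK1 scale1r | rewrite pi1]. Qed.
Lemma homogK nu : homog 0 (K nu).
Proof.
by split; [apply: iag_gen; right; exists nu | rewrite conjK_K scale1r | rewrite pi_K].
Qed.
Lemma homogE l : homog (if val l == 0%N then 1 else 0) (E l).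
Proof.
split; first by apply: iag_gen; left; exists l.
- by rewrite conjK_E lpair_mu0; case: eqP => _; rewrite ?expr1 ?expr0 ?expr0z.
- by rewrite pi_E; case: eqP.
Qed.

(* On degrees <= D, pi_A agrees with the globally linear spectral projector
   [proj D] of conjugation by K_mu0. *)
Definition proj D := eigen_proj (conjK (mu0 m)) lam D.

Lemma proj_lin D : lin (proj D).
Proof. by apply: eigen_proj_lin; apply: conjK_lin. Qed.

Lemma proj_homog D d x : homog d x -> (d <= D)%N -> proj D x = pi x.
Proof.
by case=> _ hx ->; apply: eigen_proj_eigvec; [exact: conjK_lin | exact: lam_not_root1 |].
Qed.

Definition homog_tensor d t :=
  exists a b d1 d2, [/\ t = i1 a * i2 b, homog d1 a, homog d2 b & (d1 + d2)%N = d].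
Definition graded d x := homog d x /\ span (homog_tensor d) (Delta x).

Lemma homog_tensor_pure d1 d2 a b : homog d1 a -> homog d2 b ->
  homog_tensor (d1 + d2) (i1 a * i2 b).
Proof. by move=> ha hb; exists a, b, d1, d2. Qed.

Lemma graded_mul d e x y : graded d x -> graded e y -> graded (d + e) (x * y).
Proof.
case=> h1 h2 [g1 g2]; split; first exact: homog_mul.
rewrite (ahM Delta_ah); apply: (span_mul _ h2 g2).
move=> _ _ [a [b [d1 [d2 [-> ha hb <-]]]]] [c [f [e1 [e2 [-> hc hf <-]]]]].
rewrite (pure_mul HT); apply: span_gen.
rewrite (_ : (d1 + d2 + (e1 + e2) = (d1 + e1) + (d2 + e2))%N); last lia.
by apply: homog_tensor_pure; apply: homog_mul.
Qed.

Lemma graded1 : graded 0 1.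
Proof.
split; first exact: homog1.
rewrite (ah1 Delta_ah) -(i1i2_1 HT); apply: span_gen.
exact: (homog_tensor_pure homog1 homog1).
Qed.
Lemma gradedK nu : graded 0 (K nu).
Proof.
split; first exact: homogK.
by rewrite Delta_K; apply: span_gen; apply: (homog_tensor_pure (homogK nu) (homogK nu)).
Qed.
Lemma gradedE l : graded (if val l == 0%N then 1 else 0) (E l).
Proof.
split; first exact: homogE.
rewrite Delta_E; apply: span_add; apply: span_gen.
  by rewrite -[X in homog_tensor X]add0n; apply: homog_tensor_pure; [apply: homogK | apply: homogE].
by rewrite -[X in homog_tensor X]addn0; apply: homog_tensor_pure; [apply: homogE | apply: homog1].
Qed.

Definition graded_upto D x := span (fun y => exists d, (d <= D)%N /\ graded d y) x.

Lemma graded_upto_mono D D' x : (D <= D')%N -> graded_upto D x -> graded_upto D' x.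
Proof.
by move=> h; apply: span_mono => y [d [hd g]]; exists d; split => //; apply: leq_trans h.
Qed.

Lemma graded_upto_Uge0 D x : graded_upto D x -> Uge0 E K x.
Proof.
by elim=> [|a t u [d [_ [[h _ _] _]]] _ IH]; [apply: in_alg_gen0 | apply: iag_lin].
Qed.

Lemma Uge0_graded_upto x : Uge0 E K x -> exists D, graded_upto D x.
Proof.
elim=> [g [[i ->]|[mu ->]]| |a u w _ [D1 IH1] _ [D2 IH2]|u w _ [D1 IH1] _ [D2 IH2]].
- exists 1%N; apply: span_gen; exists (if val i == 0%N then 1%N else 0%N).
  by split; [case: eqP | apply: gradedE].
- by exists 0%N; apply: span_gen; exists 0%N; split => //; apply: gradedK.
- by exists 0%N; apply: span_gen; exists 0%N; split => //; apply: graded1.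
- exists (maxn D1 D2); apply: span_add; first apply: span_scale.
    by apply: graded_upto_mono IH1; apply: leq_maxl.
  by apply: graded_upto_mono IH2; apply: leq_maxr.
- exists (D1 + D2)%N; apply: (span_mul _ IH1 IH2) => y z [d [hd gy]] [e [he gz]].
  apply: span_gen; exists (d + e)%N; split; first exact: leq_add.
  exact: graded_mul.
Qed.

Lemma Uge0_seq_graded_upto (s : seq (U * U)) :
  {in s, forall p, Uge0 E K p.1 /\ Uge0 E K p.2} ->
  exists D, {in s, forall p, graded_upto D p.1 /\ graded_upto D p.2}.
Proof.
elim: s => [|p s IH] H; first by exists 0%N.
have [D1 HD1] := IH (fun x hx => H x (mem_behead (s := p :: s) hx)).
have [h1 h2] := H p (mem_head _ _).
have [D2 H2] := Uge0_graded_upto h1; have [D3 H3] := Uge0_graded_upto h2.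
exists (maxn D1 (maxn D2 D3)) => x; rewrite in_cons => /orP [/eqP ->|hx].
  by split; [apply: graded_upto_mono H2 | apply: graded_upto_mono H3]; lia.
by have [g1 g2] := HD1 x hx; split; [apply: graded_upto_mono g1 | apply: graded_upto_mono g2]; lia.
Qed.

Lemma proj_graded_upto D x : graded_upto D x -> proj D x = pi x.
Proof.
elim=> [|a t u [d [hd [ht _]]] hu IH]; first by rewrite (lin0 (proj_lin D)) pi0.
rewrite (proj_lin D) (proj_homog ht hd) IH pi_lin //; first by case: ht.
exact: graded_upto_Uge0 hu.
Qed.

(* The key compatibility: (pi_A (x) pi_A) o Delta = Delta o pi_A on U^(>=0),
   where pi_A (x) pi_A is realised by the linear map proj D (x) proj D. *)
Lemma tensor_proj_Delta D (Q : T -> T) : lin Q ->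
  (forall a b, Q (i1 a * i2 b) = i1 (proj D a) * i2 (proj D b)) ->
  forall x, graded_upto D x -> Q (Delta x) = Delta (pi x).
Proof.
move=> hQ HQ x; have Delta_lin := ah_lin Delta_ah.
have [i1_0 i2_0] := (lin0 (ah_lin (i1_ah HT)), lin0 (ah_lin (i2_ah HT))).
elim=> [|a t u [d [hd [ht hs]]] hu IH]; first by rewrite (lin0 Delta_lin) (lin0 hQ) pi0 (lin0 Delta_lin).
have [Ut _ pit] := ht; have Uu := graded_upto_Uge0 hu.
rewrite Delta_lin hQ IH pi_lin // Delta_lin pit; congr (_ *: _ + _).
have -> : Q (Delta t) = if d == 0%N then Delta t else 0.
  move: (Delta t) hs; apply: span_ext => //.
    by case: eqP => _ a0 x0 y0; rewrite ?scaler0 ?addr0.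
  move=> _ [a0 [b0 [d1 [d2 [-> ha hb hdd]]]]].
  rewrite HQ (proj_homog ha) ?(proj_homog hb); try lia.
  case: ha => _ _ ->; case: hb => _ _ ->; rewrite -hdd addn_eq0.
  by case: eqP => _; case: eqP => _ /=; rewrite ?i1_0 ?i2_0 ?mulr0 ?mul0r.
by case: eqP => _; rewrite ?(lin0 Delta_lin).
Qed.

Lemma ad_pi_mul_rule h v w (s : seq (U * U)) : Uge0 E K h ->
  {in s, forall p, Uge0 E K p.1 /\ Uge0 E K p.2} ->
  Delta h = \sum_(p <- s) i1 p.1 * i2 p.2 ->
  ad (pi h) (v * w) = \sum_(p <- s) ad (pi p.1) v * ad (pi p.2) w.
Proof.
move=> hh hs hD; have [G [hG HG]] := ad_pair_lift v w.
have [D1 H1] := Uge0_graded_upto hh; have [D2 H2] := Uge0_seq_graded_upto hs.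
set D := maxn D1 D2.
have [Q [hQ HQ]] := tensor_map HT (proj_lin D) (proj_lin D).
rewrite (ad_mul_rule (Uge0_noE1_Uge0 (pi_Uge0_noE1 hh)) hG HG).
rewrite -(tensor_proj_Delta hQ HQ); last by apply: graded_upto_mono H1; apply: leq_maxl.
rewrite hD (lin_sum hQ) (lin_sum hG) big_seq [RHS]big_seq.
apply: eq_bigr => p hp; rewrite HQ HG; have [g1 g2] := H2 p hp.
by rewrite !(proj_graded_upto (D := D)) //; apply: graded_upto_mono (leq_maxr _ _) _.
Qed.
Lemma ad_pi_Ucm h v : Uge0 E K h -> Ucm E Tl v -> Ucm E Tl (ad (pi h) v).
Proof. by move=> hh; apply/ad_Uge0_noE1_Ucm/pi_Uge0_noE1. Qed.

Lemma ad_pi_one h : Uge0 E K h -> ad (pi h) 1 = eps h *: 1.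
Proof. by move=> hh; rewrite ad_one ?eps_pi //; apply/Uge0_noE1_Uge0/pi_Uge0_noE1. Qed.
End QuantumGroup.

Theorem corollary6p2 (k : closedFieldType) (q : k) (m : nat) (U T : algType k)
    (E F : 'I_m -> U) (K : QA m -> U) (i1 i2 : U -> T) (Delta : U -> T)
    (S : U -> U) (eps : U -> k) (Tl : 'I_m -> U -> U) (pi : U -> U)
    (adT : U -> T -> U) :
  [pchar k] =i pred0 ->
  q != 0 -> (forall n : nat, (0 < n)%N -> q ^+ n != 1) ->
  (1 < m)%N ->
  is_Uq q E F K ->
  is_tensor i1 i2 ->
  Uq_coproduct E F K i1 i2 Delta ->
  Uq_antipode E K S ->
  Uq_counit E K eps ->
  lusztig q E F K Tl ->
  piA_spec E K pi ->
  adT_spec i1 i2 S adT ->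
  let ad := fun h u => adT u (Delta h) in
  let lam := fun h v => ad (pi h) v in
  (* Im(lambda_A) is contained in U_q^{c_m} *)
  (forall h v, Uge0 E K h -> Ucm E Tl v -> Ucm E Tl (lam h v)) /\
  (* U_q^{c_m} is a left U_A^{>=0}-module algebra via lambda_A *)
  (forall a h h' v, Uge0 E K h -> Uge0 E K h' -> Ucm E Tl v ->
     lam (a *: h + h') v = a *: lam h v + lam h' v) /\
  (forall a h v v', Uge0 E K h -> Ucm E Tl v -> Ucm E Tl v' ->
     lam h (a *: v + v') = a *: lam h v + lam h v') /\
  (forall v, Ucm E Tl v -> lam 1 v = v) /\
  (forall h h' v, Uge0 E K h -> Uge0 E K h' -> Ucm E Tl v ->
     lam (h * h') v = lam h (lam h' v)) /\
  (forall h, Uge0 E K h -> lam h 1 = eps h *: 1) /\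
  (forall h v w (s : seq (U * U)), Uge0 E K h -> Ucm E Tl v -> Ucm E Tl w ->
     {in s, forall p, Uge0 E K p.1 /\ Uge0 E K p.2} ->
     Delta h = \sum_(p <- s) i1 p.1 * i2 p.2 ->
     lam h (v * w) = \sum_(p <- s) lam p.1 v * lam p.2 w).
Proof.
move=> _ hq hqn hm HU HT HD HS He HL Hpi Had ad lam.
split; first by move=> h v hh hv; eapply ad_pi_Ucm; eassumption.
split; first by move=> a h h' v hh hh' _; rewrite /lam (pi_lin Hpi) //; eapply ad_linh; eassumption.
split; first by move=> a h v v' _ _ _; eapply ad_lin; eassumption.
split; first by move=> v _; rewrite /lam (pi1 Hpi); eapply ad1; eassumption.
split; first by move=> h h' v hh hh' _; rewrite /lam (pi_mul Hpi) //; eapply ad_mul; eassumption.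
split; first by move=> h hh; eapply ad_pi_one; eassumption.
by move=> h v w s hh _ _ hs hD; eapply ad_pi_mul_rule; eassumption.
Qed.
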